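(* Let $R$ be an affine algebra over a field $K$ with no zero divisors, and let $\overline{V}_1\subseteq V_1\subseteq\overline{V}_2\subseteq V_2\subseteq\cdots\subseteq R$ be finite-dimensional $K$-subspaces such that (a) for every $r\in R$, $\lim_{n}\dim_K(V_nr+V_n)/\dim_K(V_n)=1$; (b) $\lim_n\dim_K(\overline{V}_n)/\dim_K(V_n)=1$; (c) for every finite-dimensional subspace $Z\subseteq R$ there is $k$ with $\overline{V}_n+\overline{V}_nZ\subseteq V_n$ for all $n>k$. Let $\{e_i\}_{i\ge1}$ be a basis of $R$ such that for each $i$, if $\dim_K\overline{V}_i=k_i$ and $\dim_K V_i=l_i$, then $e_1,\dots,e_{k_i}$ is a basis of $\overline{V}_i$ and $e_1,\dots,e_{l_i}$ is a basis of $V_i$. For $0\neq s\in R$ and $k\ge1$ let $$F_k(s)=\{e_j\in V_k: e_js\notin V_k\},\qquad B_k(s)=\{e_j\notin V_k: e_js\in V_k\}.$$ Then $$\lim_{k\to\infty}\frac{|F_k(s)|}{\dim_K(V_k)}=0\quad\text{and}\quad\lim_{k\to\infty}\frac{|B_k(s)|}{\dim_K(V_k)}=0.$$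
   Context: An affine algebra is a finitely generated associative algebra over $K$, not necessarily unital. For subspaces $V,Z$, $VZ$ is the $K$-span of products $vz$. *)

(* A (possibly non-unital) associative K-algebra is given as an
   lmodType K together with an explicit bilinear associative multiplication. *)
From HB Require Import structures.
From mathcomp Require Import all_boot all_order all_algebra.
From Stdlib Require Import ClassicalEpsilon.
Set Implicit Arguments. Unset Strict Implicit. Unset Printing Implicit Defensive.
Import Order.TTheory GRing.Theory Num.Theory.
Local Open Scope ring_scope.

Section Defs.
Variables (K : fieldType) (R : lmodType K).

Definition spanP (S : R -> Prop) : R -> Prop :=
  fun x => exists s : seq R, (forall y, y \in s -> S y) /\
    exists c : nat -> K, x = \sum_(i < size s) c i *: s`_i.

Definition span (s : seq R) : R -> Prop :=
  fun x => exists c : nat -> K, x = \sum_(i < size s) c i *: s`_i.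

Definition free (s : seq R) : Prop :=
  forall c : nat -> K, \sum_(i < size s) c i *: s`_i = 0 ->
    forall i, (i < size s)%N -> c i = 0.

Definition subspace (W : R -> Prop) : Prop :=
  W 0 /\ forall (a : K) x y, W x -> W y -> W (a *: x + y).

Definition subsp (U W : R -> Prop) : Prop := forall x, U x -> W x.

Definition is_basis_of (W : R -> Prop) (s : seq R) : Prop :=
  free s /\ forall x, W x <-> span s x.

Definition has_dim (W : R -> Prop) (d : nat) : Prop :=
  exists s : seq R, size s = d /\ is_basis_of W s.

Definition findim (W : R -> Prop) : Prop := subspace W /\ exists d, has_dim W d.

(* dim_K W (meaningful when W is finite-dimensional) *)
Definition dimK (W : R -> Prop) : nat :=
  epsilon (inhabits 0%N) (fun d => has_dim W d).

Definition sumsp (U W : R -> Prop) : R -> Prop :=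
  fun x => exists u w, U u /\ W w /\ x = u + w.

Definition prodsp (mul : R -> R -> R) (V Z : R -> Prop) : R -> Prop :=
  spanP (fun x => exists v z, V v /\ Z z /\ x = mul v z).

Definition rmulsp (mul : R -> R -> R) (V : R -> Prop) (r : R) : R -> Prop :=
  spanP (fun x => exists v, V v /\ x = mul v r).

Definition gen_subalg (mul : R -> R -> R) (g : seq R) : R -> Prop :=
  fun x => forall P : R -> Prop, P 0 ->
    (forall (a : K) u v, P u -> P v -> P (a *: u + v)) ->
    (forall u v, P u -> P v -> P (mul u v)) ->
    (forall y, y \in g -> P y) -> P x.

Definition is_algebra (mul : R -> R -> R) : Prop :=
  (forall (a : K) x y z, mul (a *: x + y) z = a *: mul x z + mul y z) /\
  (forall (a : K) x y z, mul z (a *: x + y) = a *: mul z x + mul z y) /\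
  (forall x y z, mul x (mul y z) = mul (mul x y) z).

Definition affine (mul : R -> R -> R) : Prop :=
  exists g : seq R, forall x, gen_subalg mul g x.

Definition no_zero_divisors (mul : R -> R -> R) : Prop :=
  forall x y, mul x y = 0 -> x = 0 \/ y = 0.

(* e : nat -> R is a basis of R (e 0, e 1, ... plays the role of e_1, e_2, ...) *)
Definition basisR (e : nat -> R) : Prop :=
  (forall n, free (mkseq e n)) /\ (forall x, exists n, span (mkseq e n) x).

End Defs.

(* cardinality of a finite set of natural numbers (junk value if infinite) *)
Definition ncard (P : nat -> Prop) : nat :=
  epsilon (inhabits 0%N)
    (fun n => exists s : seq nat, uniq s /\ size s = n /\ forall j, P j <-> j \in s).

Definition finiteP (P : nat -> Prop) : Prop := exists n, forall j, P j -> (j < n)%N.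

Definition lim_to (u : nat -> rat) (l : rat) : Prop :=
  forall eps : rat, 0 < eps -> exists N, forall n, (N <= n)%N -> `|u n - l| < eps.

Definition ratQ (a b : nat) : rat := a%:R / b%:R.

From Pilot Require Import Defs.
From HB Require Import structures.
From mathcomp Require Import all_boot all_order all_algebra.
From Stdlib Require Import ClassicalEpsilon.
Import Order.TTheory GRing.Theory Num.Theory.
Local Open Scope ring_scope.
Set Implicit Arguments. Unset Strict Implicit. Unset Printing Implicit Defensive.

(* Since s is not a zero divisor, x |-> x s is injective and linear, so it maps
   independent families to independent ones.  By (c) for Z = K s, e_j s lies in
   V_k for all j < dim Vb_k once k is large.  Hence the indices in F_k(s) lie in
   [dim Vb_k, dim V_k), while the indices in B_k(s) together with
   0, ..., dim Vb_k - 1 yield an independent family e_j s inside V_k.  Either way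
   the count is at most dim V_k - dim Vb_k, which is o(dim V_k) by (b). *)

Section LinearAlgebra.
Variables (K : fieldType) (R : lmodType K).

Lemma free_ord_coef_eq0 (f : seq R) : Defs.free f ->
  forall c : 'I_(size f) -> K, \sum_i c i *: f`_i = 0 -> forall i, c i = 0.
Proof.
move=> f_free c c0 i.
pose d n := oapp c 0 (insub n).
have dE j : d (val j) = c j by rewrite /d valK.
rewrite -dE; apply: f_free (ltn_ord i).
by rewrite -[RHS]c0; apply: eq_bigr => j _; rewrite dE.
Qed.

Lemma free_coord_row_free (f w : seq R) (A : 'M[K]_(size f, size w)) :
  Defs.free f -> (forall i : 'I_(size f), f`_i = \sum_j A i j *: w`_j) ->
  row_free A.
Proof.
move=> f_free fA; rewrite -kermx_eq0; apply/rowV0P => v /sub_kermxP vA0.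
apply/rowP => i; rewrite mxE; apply: (free_ord_coef_eq0 f_free (c := fun i => v 0 i)).
transitivity (\sum_j (v *m A) 0 j *: w`_j); last first.
  by rewrite vA0; apply: big1 => j _; rewrite mxE scale0r.
under eq_bigr => i' _ do rewrite fA scaler_sumr.
rewrite exchange_big; apply: eq_bigr => j _ /=.
by rewrite mxE scaler_suml; apply: eq_bigr => i' _; rewrite scalerA.
Qed.

Lemma free_span_size_le (f w : seq R) :
  Defs.free f -> (forall i, (i < size f)%N -> Defs.span w f`_i) ->
  (size f <= size w)%N.
Proof.
move=> f_free f_span.
have /fin_all_exists [c fc] : forall i : 'I_(size f),
    exists c : nat -> K, f`_i = \sum_(j < size w) c j *: w`_j.
  by move=> i; apply: f_span (ltn_ord i).
pose A := \matrix_(i < size f, j < size w) c i j.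
have A_free : row_free A.
  apply: free_coord_row_free f_free _ => i.
  by rewrite fc; apply: eq_bigr => j _; rewrite mxE.
by have := rank_leq_col A; rewrite (eqP A_free).
Qed.

Lemma free_map_linear (phi : R -> R) (xs : seq R) :
  (forall a x y, phi (a *: x + y) = a *: phi x + phi y) ->
  (forall x, phi x = 0 -> x = 0) -> Defs.free xs -> Defs.free (map phi xs).
Proof.
move=> phi_lin phi_inj xs_free c; rewrite size_map => c0.
have phi0 : phi 0 = 0.
  by apply: (addrI (phi 0)); rewrite addr0 -{1}[phi 0]scale1r -phi_lin scale1r addr0.
have phiD : {morph phi : x y / x + y}.
  by move=> x y; rewrite -{1}[x]scale1r phi_lin scale1r.
have phiZ a x : phi (a *: x) = a *: phi x by rewrite -[a *: x]addr0 phi_lin phi0 addr0.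
apply: xs_free; apply: phi_inj; rewrite (big_morph phi phiD phi0) -[RHS]c0.
by apply: eq_bigr => i _; rewrite phiZ (nth_map 0).
Qed.

Section PrefixBasis.
Variable e : nat -> R.
Hypothesis e_free : forall n, Defs.free (mkseq e n).

Lemma free_map_uniq (t : seq nat) : uniq t -> Defs.free (map e t).
Proof.
move=> t_uniq c; rewrite size_map => c0 i ti.
pose N := (\max_(j <- t) j).+1.
have t_ltN j : j \in t -> (j < N)%N.
  by move=> jt; rewrite ltnS (@leq_bigmax_seq _ t xpredT id j jt isT).
pose d j := if j \in t then c (index j t) else 0.
suff /e_free : \sum_(j < size (mkseq e N)) d j *: (mkseq e N)`_j = 0.
  move/(_ t`_i); rewrite size_mkseq t_ltN ?mem_nth //.
  by rewrite /d mem_nth // index_uniq // => ->.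
rewrite size_mkseq -[RHS]c0.
transitivity (\sum_(0 <= j < N | j \in t) c (index j t) *: e j).
  rewrite big_mkord [RHS]big_mkcond; apply: eq_bigr => j _.
  by rewrite nth_mkseq // /d; case: ifP; rewrite ?scale0r.
have t_perm : perm_eq [seq j <- index_iota 0 N | j \in t] t.
  apply: uniq_perm => //; first by rewrite filter_uniq ?iota_uniq.
  move=> j; rewrite mem_filter mem_index_iota.
  by case jt: (j \in t); rewrite //= t_ltN.
rewrite -big_filter (perm_big _ t_perm) (big_nth 0%N) big_mkord.
by apply: eq_bigr => j _; rewrite (nth_map 0%N) // index_uniq.
Qed.

Lemma uniq_size_le_dim_linear (phi : R -> R) (W : R -> Prop) d (u : seq nat) :
  (forall a x y, phi (a *: x + y) = a *: phi x + phi y) ->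
  (forall x, phi x = 0 -> x = 0) -> is_basis_of W (mkseq e d) ->
  uniq u -> (forall j, j \in u -> W (phi (e j))) -> (size u <= d)%N.
Proof.
move=> phi_lin phi_inj [_ W_span] u_uniq u_W.
have := free_span_size_le (w := mkseq e d)
  (free_map_linear phi_lin phi_inj (free_map_uniq u_uniq)).
rewrite !size_map size_iota; apply => i ui.
by rewrite -map_comp (nth_map 0%N) ?size_map //; apply/W_span/u_W/mem_nth.
Qed.

Lemma uniq_size_le_dim (W : R -> Prop) d (u : seq nat) :
  is_basis_of W (mkseq e d) ->
  uniq u -> (forall j, j \in u -> W (e j)) -> (size u <= d)%N.
Proof. exact: (@uniq_size_le_dim_linear id). Qed.

Lemma basis_prefix_mem (W : R -> Prop) n :
  is_basis_of W (mkseq e n) -> forall j, W (e j) <-> (j < n)%N.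
Proof.
move=> W_basis; have W_prefix j : (j < n)%N -> W (e j).
  move=> jn; apply/W_basis.2; exists (fun i => (i == j)%:R).
  rewrite size_mkseq (bigD1 (Ordinal jn)) //= nth_mkseq // eqxx scale1r big1 ?addr0 //.
  by move=> i /negbTE ij; rewrite -val_eqE /= in ij; rewrite ij scale0r.
move=> j; split => [Wj|]; last exact: W_prefix.
rewrite ltnNge; apply/negP => nj.
suff: (size (rcons (iota 0 n) j) <= n)%N by rewrite size_rcons size_iota ltnn.
apply: uniq_size_le_dim W_basis _ _ => [|i].
  by rewrite rcons_uniq iota_uniq mem_iota -leqNgt nj.
by rewrite mem_rcons inE mem_iota => /predU1P [-> // | /andP [_ /W_prefix]].
Qed.

End PrefixBasis.

Lemma span_subspace (w : seq R) : subspace (Defs.span w).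
Proof.
split; first by exists (fun _ => 0); rewrite big1 // => i _; rewrite scale0r.
move=> a x y [cx ->] [cy ->]; exists (fun i => a * cx i + cy i).
by rewrite scaler_sumr -big_split; apply: eq_bigr => i _; rewrite scalerDl scalerA.
Qed.

Lemma span1_findim (s : R) : s != 0 -> findim (Defs.span [:: s]).
Proof.
move=> s_neq0; split; first exact: span_subspace.
exists 1%N, [:: s]; split=> //; split=> // c.
rewrite big_ord1 => /eqP; rewrite scaler_eq0 (negbTE s_neq0) orbF => /eqP c0 i.
by rewrite ltnS leqn0 => /eqP ->.
Qed.

Lemma mul_mem_of_sum_prod_subsp (mul : R -> R -> R) (U Z W : R -> Prop) v z :
  subspace U -> subsp (sumsp U (prodsp mul U Z)) W -> U v -> Z z -> W (mul v z).
Proof.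
move=> [U0 _] UZ_W Uv Zz; apply: UZ_W; exists 0, (mul v z); split=> //.
split; last by rewrite add0r.
exists [:: mul v z]; split; first by move=> y; rewrite inE => /eqP ->; exists v, z.
by exists (fun _ => 1); rewrite big_ord1 scale1r.
Qed.

End LinearAlgebra.

Lemma finiteP_of_uniq_bound (P : nat -> Prop) m :
  (forall u, uniq u -> (forall j, j \in u -> P j) -> (size u <= m)%N) -> finiteP P.
Proof.
move=> P_bound; apply: NNPP => P_inf.
have P_unbounded n : exists2 j, (n <= j)%N & P j.
  apply: NNPP => none; apply: P_inf; exists n => j Pj.
  by rewrite ltnNge; apply/negP => nj; apply: none; exists j.
have long_list q : exists u, [/\ uniq u, size u = q & forall j, j \in u -> P j].
  elim: q => [|q [u [u_uniq u_size u_P]]]; first by exists [::].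
  have [j u_lt_j Pj] := P_unbounded (\max_(i <- u) i).+1.
  exists (j :: u); split; last by move=> i /predU1P [-> | /u_P].
  - rewrite /= u_uniq andbT; apply: contraTN u_lt_j => ju.
    by rewrite -leqNgt (@leq_bigmax_seq _ u xpredT id j ju isT).
  - by rewrite /= u_size.
have [u [u_uniq u_size u_P]] := long_list m.+1.
by have := P_bound u u_uniq u_P; rewrite u_size ltnn.
Qed.

Lemma ncard_spec (P : nat -> Prop) : finiteP P ->
  exists s, [/\ uniq s, size s = ncard P & forall j, P j <-> j \in s].
Proof.
move=> [n P_lt].
pose s := [seq j <- iota 0 n | excluded_middle_informative (P j)].
have s_P j : P j <-> j \in s.
  rewrite mem_filter mem_iota add0n; case: excluded_middle_informative => //= Pj.
  by split=> // _; apply: P_lt.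
have /(epsilon_spec (inhabits 0%N)) [t [t_uniq [t_size t_P]]] :
    exists q, exists t, uniq t /\ size t = q /\ forall j, P j <-> j \in t.
  by exists (size s), s; rewrite filter_uniq ?iota_uniq.
by exists t; split.
Qed.

Lemma ncard_add_le (P Q : nat -> Prop) b m :
  (forall u, uniq u -> (forall j, j \in u -> Q j) -> (size u <= m)%N) ->
  (forall j, (j < b)%N -> Q j) -> (forall j, P j -> Q j /\ (b <= j)%N) ->
  (ncard P + b <= m)%N.
Proof.
move=> Q_bound Q_prefix P_Q.
have P_fin : finiteP P.
  apply: (@finiteP_of_uniq_bound _ m) => u u_uniq u_P.
  by apply: Q_bound => // j /u_P /P_Q [].
have [s [s_uniq <- s_P]] := ncard_spec P_fin.
rewrite addnC -(size_iota 0 b) -size_cat; apply: Q_bound => [|j].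
  rewrite cat_uniq iota_uniq s_uniq andbT /=; apply/hasPn => j /s_P /P_Q [_].
  by rewrite mem_iota -leqNgt.
by rewrite mem_cat mem_iota => /orP [/Q_prefix | /s_P /P_Q []].
Qed.

Lemma lim_to_ratQ_defect (b c l : nat -> nat) N :
  lim_to (fun n => ratQ (b n) (l n)) 1 ->
  (forall n, (N <= n)%N -> (c n + b n <= l n)%N) ->
  lim_to (fun n => ratQ (c n) (l n)) 0.
Proof.
move=> b_lim cb_le eps eps_gt0; have [M b_close] := b_lim eps eps_gt0.
exists (maxn M N) => n; rewrite geq_max => /andP [Mn Nn].
apply: le_lt_trans (b_close n Mn); rewrite subr0 distrC /ratQ.
have [-> | l_neq0] := eqVneq (l n) 0%N; first by rewrite invr0 mulr0 normr0.
have l_gt0 : 0 < (l n)%:R :> rat by rewrite ltr0n lt0n.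
rewrite ger0_norm ?divr_ge0 //; apply: le_trans (ler_norm _).
have -> : 1 - (b n)%:R / (l n)%:R = ((l n)%:R - (b n)%:R) / (l n)%:R :> rat.
  by rewrite mulrBl divff ?pnatr_eq0.
by rewrite ler_pM2r ?invr_gt0 // lerBrDr -natrD ler_nat cb_le.
Qed.

Theorem lemma4 (K : fieldType) (R : lmodType K) (mul : R -> R -> R)
  (Halg : is_algebra mul) (Haff : affine mul) (Hdom : no_zero_divisors mul)
  (Vb V : nat -> R -> Prop)
  (HVbfin : forall n, findim (Vb n)) (HVfin : forall n, findim (V n))
  (Hchain1 : forall n, subsp (Vb n) (V n))
  (Hchain2 : forall n, subsp (V n) (Vb n.+1))
  (Ha : forall r : R, lim_to (fun n => ratQ (dimK (sumsp (rmulsp mul (V n) r) (V n)))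
                                            (dimK (V n))) 1)
  (Hb : lim_to (fun n => ratQ (dimK (Vb n)) (dimK (V n))) 1)
  (Hc : forall Z : R -> Prop, findim Z -> exists k, forall n, (k < n)%N ->
          subsp (sumsp (Vb n) (prodsp mul (Vb n) Z)) (V n))
  (e : nat -> R) (He : basisR e)
  (HeV : forall i, is_basis_of (Vb i) (mkseq e (dimK (Vb i))) /\
                   is_basis_of (V i) (mkseq e (dimK (V i))))
  (s : R) (Hs : s != 0) :
  let F k := fun j : nat => V k (e j) /\ ~ V k (mul (e j) s) in
  let B k := fun j : nat => ~ V k (e j) /\ V k (mul (e j) s) in
  (forall k, finiteP (F k) /\ finiteP (B k)) /\
  lim_to (fun k => ratQ (ncard (F k)) (dimK (V k))) 0 /\
  lim_to (fun k => ratQ (ncard (B k)) (dimK (V k))) 0.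
Proof.
move=> F B; have e_free := He.1.
have V_mem k j : V k (e j) <-> (j < dimK (V k))%N :=
  basis_prefix_mem e_free (HeV k).2 j.
have Vb_mem k j : Vb k (e j) <-> (j < dimK (Vb k))%N :=
  basis_prefix_mem e_free (HeV k).1 j.
have mul_s_lin a x y : mul (a *: x + y) s = a *: mul x s + mul y s := Halg.1 a x y s.
have mul_s_inj x : mul x s = 0 -> x = 0.
  by move/Hdom => [// | s0]; move: Hs; rewrite s0 eqxx.
have V_bound k u := uniq_size_le_dim (u := u) e_free (HeV k).2.
have Vs_bound k u :=
  uniq_size_le_dim_linear (u := u) e_free mul_s_lin mul_s_inj (HeV k).2.
have [k0 Vb_s_V] := Hc _ (span1_findim Hs).
have Vb_mul_s k j : (k0 < k)%N -> (j < dimK (Vb k))%N -> V k (mul (e j) s).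
  move=> k0k /Vb_mem Vbj; apply: mul_mem_of_sum_prod_subsp (Vb_s_V k k0k) Vbj _.
    exact: (HVbfin k).1.
  by exists (fun _ => 1); rewrite big_ord1 scale1r.
split.
  move=> k; split; first by exists (dimK (V k)) => j [/V_mem].
  apply: (@finiteP_of_uniq_bound _ (dimK (V k))) => u u_uniq u_B.
  by apply: Vs_bound => // j /u_B [].
split; apply: (lim_to_ratQ_defect (N := k0.+1) Hb) => k k0k.
  apply: ncard_add_le (V_bound k) _ _ => [j /Vb_mem /Hchain1 // | j [Vj nVjs]].
  by split=> //; rewrite leqNgt; apply/negP => /(Vb_mul_s _ _ k0k).
apply: ncard_add_le (Vs_bound k) _ _ => [j /(Vb_mul_s _ _ k0k) // | j [nVj Vjs]].
by split=> //; rewrite leqNgt; apply/negP => /Vb_mem /Hchain1.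
Qed.
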